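(* Let $R$ be a commutative ring with identity, let $(S,\leq)$ be a strictly ordered monoid in which $\leq$ is a total order, and let $w\in S$. Let $P_w:[[R^{S,\leq}]]\to[[R^{S,\leq}]]$ be given by $P_w(f)(s)=f(s)$ if $s<w$ and $P_w(f)(s)=0$ otherwise, and set $B_w=\{(u,v)\in S\times S: u<w,\ v<w,\ u+v\not<w\}$. Then $([[R^{S,\leq}]],P_w)$ is a Rota-Baxter algebra (of weight $-1$) if and only if $w\geq 0$ and $B_w=\emptyset$.
   Context: All monoids are commutative and written additively with neutral element $0$. A partially ordered set is artinian if every strictly decreasing sequence is finite, and narrow if every subset of pairwise incomparable elements is finite. A strictly ordered monoid is a commutative monoid $S$ with a partial order $\leq$ such that $s<s'$ implies $s+t<s'+t$ for all $s,s',t\in S$. The ring of generalized power series $[[R^{S,\leq}]]$ is the set of maps $f:S\to R$ with artinian and narrow support $\{s: f(s)\neq 0\}$, with pointwise addition and convolution $(fg)(s)=\sum f(u)g(v)$ over the finitely many pairs $(u,v)$ with $u+v=s$, $f(u)\neq0$, $g(v)\neq0$. A Rota-Baxter algebra (of weight $-1$) is an associative $R$-algebra $A$ with an $R$-linear $P:A\to A$ satisfying $P(x)P(y)=P(xP(y))+P(P(x)y)-P(xy)$ for all $x,y\in A$. *)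

From HB Require Import structures.
From mathcomp Require Import all_boot all_order all_algebra.
From mathcomp Require Import boolp classical_sets functions cardinality fsbigop.
Set Implicit Arguments.
Unset Strict Implicit.
Unset Printing Implicit Defensive.
Import Order.TTheory GRing.Theory Num.Theory.
Local Open Scope classical_set_scope.
Local Open Scope ring_scope.

Section GPS.
Variables (S : nmodType) (le : rel S).

Definition slt (x y : S) : bool := le x y && (x != y).

Definition is_partial_order : Prop :=
  [/\ (forall x, le x x),
      (forall x y, le x y -> le y x -> x = y) &
      (forall x y z, le x y -> le y z -> le x z)].

Definition is_total_order : Prop :=
  is_partial_order /\ (forall x y, le x y || le y x).

Definition strictly_ordered_monoid : Prop :=
  is_partial_order /\
  (forall s s' t : S, slt s s' -> slt (s + t) (s' + t)).

Definition artinian (A : set S) : Prop :=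
  ~ (exists u : nat -> S, (forall n, A (u n)) /\ (forall n, slt (u n.+1) (u n))).

Definition narrow (A : set S) : Prop :=
  forall B : set S, B `<=` A ->
    (forall x y, B x -> B y -> x <> y -> ~~ le x y /\ ~~ le y x) ->
    finite_set B.

Variable R : comNzRingType.

Definition support (f : S -> R) : set S := [set s | f s != 0].

(* membership in the ring of generalized power series [[R^{S,<=}]] *)
Definition is_gps (f : S -> R) : Prop :=
  artinian (support f) /\ narrow (support f).

(* convolution product: sum over pairs (u,v) with u+v = s
   (only finitely many nonzero terms for generalized power series) *)
Definition gps_mul (f g : S -> R) : S -> R :=
  fun s => \sum_(p \in [set p : S * S | p.1 + p.2 = s]) (f p.1 * g p.2).

Definition gps_add (f g : S -> R) : S -> R := fun s => f s + g s.
Definition gps_sub (f g : S -> R) : S -> R := fun s => f s - g s.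
Definition gps_scale (a : R) (f : S -> R) : S -> R := fun s => a * f s.

Definition rota_baxter (P : (S -> R) -> (S -> R)) : Prop :=
  [/\ (forall f, is_gps f -> is_gps (P f)),
      (forall a f g, is_gps f -> is_gps g ->
         P (gps_add (gps_scale a f) g) = gps_add (gps_scale a (P f)) (P g)) &
      (forall f g, is_gps f -> is_gps g ->
         gps_mul (P f) (P g) =
         gps_sub (gps_add (P (gps_mul f (P g))) (P (gps_mul (P f) g)))
                 (P (gps_mul f g)))].

Definition P_w (w : S) (f : S -> R) : S -> R :=
  fun s => if slt s w then f s else 0.

End GPS.

Definition B_w (S : nmodType) (le : rel S) (w : S) : set (S * S) :=
  [set p | slt le p.1 w /\ slt le p.2 w /\ ~~ slt le (p.1 + p.2) w].

From Pilot Require Import Defs.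
From HB Require Import structures.
From mathcomp Require Import all_boot all_algebra finmap ring.
From mathcomp Require Import boolp classical_sets functions cardinality fsbigop.
Set Implicit Arguments.
Unset Strict Implicit.
Unset Printing Implicit Defensive.
Import GRing.Theory.
Local Open Scope classical_set_scope.
Local Open Scope ring_scope.

(* Write [chi x] for [(x < w)%:R].  Every term of the Rota-Baxter identity for
   [P_w] is a convolution sum in which the pair (u, v) carries the weight
   [chi u * chi v], resp. [chi (u + v) * (chi u + chi v - 1)]; the sums are
   finite, and testing the identity on monomials isolates single pairs, so
   [P_w] is a Rota-Baxter operator iff the two weights agree for all u, v.
   They disagree exactly when u, v < w <= u + v, i.e. (u, v) is in [B_w], or
   when w <= u, v and u + v < w, which happens for u = v = w iff w < 0 and is
   impossible once 0 <= w.
   Finiteness of the sums: for artinian A and B, an infinite set of u in A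
   with s = u + v for some v in B contains an increasing sequence u_n (the
   order is total), and the partners v_n then strictly decrease in B. *)

Lemma dependent_choice_seq (T : Type) (C : set T) (r : T -> T -> Prop) :
  C !=set0 -> (forall x, C x -> exists2 y, C y & r x y) ->
  exists u : nat -> T, (forall n, C (u n)) /\ (forall n, r (u n) (u n.+1)).
Proof.
move=> [x0 Cx0] step.
have [next nextP] : {next : T -> T & forall x, C x -> C (next x) /\ r x (next x)}.
  apply: (choice (P := fun x y => C x -> C y /\ r x y)) => x.
  have [Cx|nCx] := pselect (C x); last by exists x.
  by have [y Cy rxy] := step x Cx; exists y.
have C_iter n : C (iter n next x0) by elim: n => //= n /nextP[].
by exists (fun n => iter n next x0); split => // n; case: (nextP _ (C_iter n)).
Qed.

Section PartialOrder.
Variables (S : nmodType) (le : rel S).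

Lemma slt_irr x : ~~ slt le x x.
Proof. by rewrite /slt eqxx andbF. Qed.

Lemma le_slt_asym : is_partial_order le -> forall x y, le x y -> slt le y x -> False.
Proof.
by move=> [_ le_anti _] x y lexy /andP[leyx]; rewrite (le_anti _ _ lexy leyx) eqxx.
Qed.

Lemma artinian_sub (A B : set S) : B `<=` A -> artinian le A -> artinian le B.
Proof.
by move=> BA artA [u [Bu decr]]; apply: artA; exists u; split => // n; apply: BA.
Qed.

End PartialOrder.

Section TotalOrder.
Variables (S : nmodType) (le : rel S).
Hypothesis le_total : is_total_order le.

Lemma slt_or_le x y : slt le x y || le y x.
Proof.
have [[le_refl _ _] le_tot] := le_total; rewrite /slt.
have [->|neq] := eqVneq x y; first by rewrite le_refl orbT.
by case/orP: (le_tot x y) => ->; rewrite ?orbT.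
Qed.

Lemma artinian_min (A : set S) : artinian le A -> A !=set0 ->
  exists2 m, A m & forall y, A y -> le m y.
Proof.
move=> artA A0; apply: contrapT => nomin; apply: artA.
apply: dependent_choice_seq (fun x y => slt le y x) A0 _ => x Ax.
apply: contrapT => nolower; apply: nomin; exists x => // y Ay.
by case/orP: (slt_or_le y x) => // ltyx; case: nolower; exists y.
Qed.

Let above (A : set S) (x : S) := [set y | A y /\ slt le x y].

Lemma infinite_above_min (A C : set S) m : C `<=` A -> infinite_set C ->
  (forall y, C y -> le m y) -> infinite_set (above A m).
Proof.
move=> CA infC minm finAm; apply: infC.
apply: (@sub_finite_set _ _ ([set m] `|` above A m)).
  move=> y Cy; have [->|neq] := eqVneq y m; first by left.
  by right; split; [apply: CA | rewrite /slt minm // eq_sym].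
by rewrite finite_setU; split => //; apply: finite_set1.
Qed.

Lemma artinian_infinite_increasing (A : set S) : artinian le A -> infinite_set A ->
  exists u : nat -> S, (forall n, A (u n)) /\ (forall n, slt le (u n) (u n.+1)).
Proof.
move=> artA infA.
(* Each x in A' has a successor in A': the least element of A above x. *)
pose A' := [set x | A x /\ infinite_set (above A x)].
suff [u [A'u incr]] : exists u : nat -> S,
    (forall n, A' (u n)) /\ (forall n, slt le (u n) (u n.+1)).
  by exists u; split => // n; case: (A'u n).
apply: (dependent_choice_seq (C := A') (r := slt le)).
  have [m Am minm] := artinian_min artA (infinite_setN0 infA).
  by exists m; split => //; apply: (infinite_above_min (C := A)).
move=> x [_ infx].
have aboveA : above A x `<=` A by move=> z [].
have [y [Ay ltxy] miny] :=
  artinian_min (artinian_sub aboveA artA) (infinite_setN0 infx).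
by exists y => //; split => //; apply: infinite_above_min aboveA infx _.
Qed.

End TotalOrder.

Section Convolution.
Variables (S : nmodType) (R : comNzRingType).
Implicit Types (a b f g : S -> R) (s : S).

Definition conv_pairs f g s : set (S * S) :=
  [set p | p.1 + p.2 = s /\ f p.1 != 0 /\ g p.2 != 0].

Lemma gps_mul_masked a b f g F G s : F =1 a \* f -> G =1 b \* g ->
  finite_set (conv_pairs f g s) ->
  gps_mul F G s =
  \sum_(p <- fset_set (conv_pairs f g s)) a p.1 * b p.2 * (f p.1 * g p.2).
Proof.
move=> /funext-> /funext-> fin_fg.
rewrite /gps_mul -(fsbig_widen (conv_pairs f g s)) ?fsbig_finite //.
- by apply: eq_bigr => p _; rewrite /= mulrACA.
- by move=> p [].
move=> [x y] [/= sum_s not_fg]; rewrite /preimage /=; apply/eqP.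
have [->|fxN0] := eqVneq (f x) 0; first by rewrite mulr0 mul0r.
have [->|gyN0] := eqVneq (g y) 0; first by rewrite !mulr0.
by case: not_fg.
Qed.

Lemma mask1 f : f =1 cst 1 \* f.
Proof. by move=> x; rewrite /= mul1r. Qed.

Lemma gps_mul_point f g u v :
  (forall x, x != u -> f x = 0) -> (forall y, y != v -> g y = 0) ->
  gps_mul f g (u + v) = f u * g v.
Proof.
move=> fu gv; rewrite /gps_mul -(fsbig_widen [set (u, v)]) ?fsbig_set1 //.
- by move=> p /= ->.
move=> [x y] [/= _ neq]; rewrite /preimage /=.
have [ex|nex] := eqVneq x u; last by rewrite fu ?mul0r.
have [ey|ney] := eqVneq y v; last by rewrite gv ?mulr0.
by case: neq; rewrite ex ey.
Qed.

Variable le : rel S.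

Lemma is_gps_sub f g : is_gps le f -> Defs.support g `<=` Defs.support f ->
  is_gps le g.
Proof.
move=> [artf narf] gf; split; first exact: artinian_sub gf artf.
by move=> B Bg; apply: narf; apply: subset_trans gf.
Qed.

Lemma is_gps_point f (c : S) : (forall x, x != c -> f x = 0) -> is_gps le f.
Proof.
move=> fc; have supp_c : Defs.support f `<=` [set c].
  by move=> x; apply: contraNeq => /fc ->.
split.
  move=> [u [fu decr]]; move: (decr 0%N).
  by rewrite (supp_c _ (fu 1%N)) (supp_c _ (fu 0%N)) (negbTE (slt_irr _ _)).
by move=> B Bf _; apply: sub_finite_set (finite_set1 c); apply: subset_trans supp_c.
Qed.

End Convolution.

Section OrderedMonoid.
Variables (S : nmodType) (le : rel S).
Hypotheses (le_som : strictly_ordered_monoid le) (le_total : is_total_order le).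

Lemma le_add2r t a b : le a b -> le (a + t) (b + t).
Proof.
have [[le_refl _ _] lt_add2r] := le_som.
have [->|neq] := eqVneq a b; first by rewrite le_refl.
by move=> leab; have /andP[] := lt_add2r a b t (introT andP (conj leab neq)).
Qed.

Lemma le_add2l t a b : le a b -> le (t + a) (t + b).
Proof. by rewrite ![t + _]addrC; apply: le_add2r. Qed.

Lemma le_add_of_nonneg_ge w u v : le 0 w -> le w u -> le w v -> le w (u + v).
Proof.
have [[_ _ le_tr] _] := le_som.
move=> le0w lewu lewv; apply: (le_tr _ _ _ lewu).
apply: (le_tr _ _ _ _ (le_add2l u lewv)).
by have := le_add2r u le0w; rewrite add0r addrC.
Qed.

Lemma slt_add_eq u u' v v' : slt le u u' -> u + v = u' + v' -> slt le v' v.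
Proof.
move=> ltuu' eq_sum; case/orP: (slt_or_le le_total v' v) => // lev'v; exfalso.
have ltv : slt le (u + v) (u' + v) by apply: le_som.2.
have lev : le (u' + v) (u' + v') by apply: le_add2l.
by rewrite -eq_sum in lev; apply: (le_slt_asym le_som.1 lev ltv).
Qed.

Lemma finite_addends (A B : set S) s : artinian le A -> artinian le B ->
  finite_set [set u | A u /\ exists v, B v /\ u + v = s].
Proof.
move=> artA artB; apply: contrapT => infU.
have UA : [set u | A u /\ exists v, B v /\ u + v = s] `<=` A by move=> x [].
have [u [Uu incr]] :=
  artinian_infinite_increasing le_total (artinian_sub UA artA) infU.
have [v vP] := choice (fun n => (Uu n).2).
apply: artB; exists v; split => n; first by case: (vP n).
by apply: slt_add_eq (incr n) _; rewrite (vP n).2 (vP n.+1).2.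
Qed.

Lemma conv_pairs_finite (R : comNzRingType) (f g : S -> R) s :
  is_gps le f -> is_gps le g -> finite_set (conv_pairs f g s).
Proof.
move=> [artf _] [artg _].
apply: sub_finite_set (finite_setX (finite_addends s artf artg)
                                   (finite_addends s artg artf)).
move=> [x y] /= [sum_s [fx gy]].
by split; split => //; [exists y | exists x; rewrite addrC].
Qed.

End OrderedMonoid.

Section RotaBaxterProjection.
Variables (S : nmodType) (le : rel S) (R : comNzRingType) (w : S).
Implicit Types (f g : S -> R) (u v : S).

Lemma P_wE f : P_w le w f =1 (fun x => (slt le x w)%:R) \* f.
Proof. by move=> x; rewrite /P_w /=; case: ifP; rewrite ?mul1r ?mul0r. Qed.

Lemma P_w_gps f : is_gps le f -> is_gps le (P_w le w f).
Proof.
move=> gf; apply: is_gps_sub gf _ => x; rewrite /Defs.support /= /P_w.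
by case: ifP; rewrite ?eqxx.
Qed.

Lemma P_w_linear a f g :
  P_w le w (gps_add (gps_scale a f) g) =
  gps_add (gps_scale a (P_w le w f)) (P_w le w g).
Proof.
apply/funext => x; rewrite /P_w /gps_add /gps_scale.
by case: ifP; rewrite ?mulr0 ?addr0.
Qed.

(* The Rota-Baxter identity for [P_w] on the monomials at u and v, read off
   at u + v. *)
Definition P_w_monomial_identity u v : Prop :=
  (slt le u w)%:R * (slt le v w)%:R =
  (slt le (u + v) w)%:R * ((slt le u w)%:R + (slt le v w)%:R - 1) :> R.

Lemma rota_baxter_P_w_monomial : rota_baxter le (P_w (R:=R) le w) ->
  forall u v, P_w_monomial_identity u v.
Proof.
move=> [_ _ rb_id] u v.
pose delta (a x : S) : R := (x == a)%:R.
have delta0 a x : x != a -> delta a x = 0 by rewrite /delta => /negbTE ->.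
have P_delta0 a x : x != a -> P_w le w (delta a) x = 0.
  by move=> xa; rewrite P_wE /= delta0 ?mulr0.
have delta_gps a : is_gps le (delta a) by apply: is_gps_point (delta0 a).
have := congr1 (fun F => F (u + v)) (rb_id _ _ (delta_gps u) (delta_gps v)).
rewrite /gps_sub /gps_add (gps_mul_point (P_delta0 u) (P_delta0 v)) !P_wE /=.
rewrite (gps_mul_point (delta0 u) (P_delta0 v)).
rewrite (gps_mul_point (P_delta0 u) (delta0 v)) (gps_mul_point (delta0 u) (delta0 v)).
rewrite !P_wE /= /delta !eqxx !(mulr1, mul1r).
by rewrite /P_w_monomial_identity => ->; ring.
Qed.

Hypotheses (le_som : strictly_ordered_monoid le) (le_total : is_total_order le).

Lemma P_w_rota_baxter : (forall u v, P_w_monomial_identity u v) ->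
  rota_baxter le (P_w (R:=R) le w).
Proof.
move=> monomial_id; split=> [f|a f g _ _|f g gf gg]; first exact: P_w_gps.
  exact: P_w_linear.
apply/funext => s; have fin_fg := conv_pairs_finite le_som le_total s gf gg.
rewrite /gps_sub /gps_add !P_wE /=.
rewrite (gps_mul_masked (P_wE f) (P_wE g) fin_fg).
rewrite (gps_mul_masked (mask1 f) (P_wE g) fin_fg).
rewrite (gps_mul_masked (P_wE f) (mask1 g) fin_fg).
rewrite (gps_mul_masked (mask1 f) (mask1 g) fin_fg).
rewrite !mulr_sumr -big_split -sumrB /=; apply: eq_big_seq => p.
rewrite in_fset_set // inE => -[sum_s _].
by move: (monomial_id p.1 p.2); rewrite /P_w_monomial_identity sum_s /cst => ->; ring.
Qed.

Lemma P_w_monomial_identityP :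
  (forall u v, P_w_monomial_identity u v) <-> le 0 w /\ B_w le w = set0.
Proof.
split=> [monomial_id | [le0w B_w0] u v].
  split.
    case/orP: (slt_or_le le_total w 0) => // ltw0.
    have ltww : slt le (w + w) w by have := le_som.2 _ _ w ltw0; rewrite add0r.
    move: (monomial_id w w).
    rewrite /P_w_monomial_identity ltww (negbTE (slt_irr _ _)) /=.
    by rewrite mul0r mul1r add0r sub0r => /eqP; rewrite eq_sym oppr_eq0 oner_eq0.
  apply/seteqP; split => [[u v] [/= ltu [ltv nlt]]|//].
  move: (monomial_id u v); rewrite /P_w_monomial_identity ltu ltv (negbTE nlt).
  by rewrite /= mul0r mul1r => /eqP; rewrite oner_eq0.
have ge_of_nlt x : ~~ slt le x w -> le w x.
  by case/orP: (slt_or_le le_total x w) => [->|].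
rewrite /P_w_monomial_identity.
have [ltu|geu] := boolP (slt le u w); have [ltv|gev] := boolP (slt le v w).
- have -> : slt le (u + v) w.
    by apply: contraT => nlt; have : B_w le w (u, v) by []; rewrite B_w0.
  by rewrite /=; ring.
- by rewrite /=; ring.
- by rewrite /=; ring.
have -> : slt le (u + v) w = false.
  apply/negbTE/negP; apply: (le_slt_asym le_som.1).
  exact: (le_add_of_nonneg_ge le_som le0w (ge_of_nlt _ geu) (ge_of_nlt _ gev)).
by rewrite /=; ring.
Qed.

End RotaBaxterProjection.

Theorem corollary3p2 (R : comNzRingType) (S : nmodType) (le : rel S)
  (Hsom : strictly_ordered_monoid le) (Htot : is_total_order le) (w : S) :
  rota_baxter le (P_w (R:=R) le w) <-> (le 0 w /\ B_w le w = set0).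
Proof.
rewrite -(P_w_monomial_identityP R w Hsom Htot).
split; first exact: rota_baxter_P_w_monomial.
exact: P_w_rota_baxter.
Qed.
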